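(* Assume (H1) and (H2), and fix $\alpha_0>0$. Then for all $f_1,f_1^*\in C[0,\alpha_0]$, $$\|U^{\alpha_0}(f_1)-U^{\alpha_0}(f_1^* )\|\le \varphi(\alpha_0)\,\|f_1-f_1^*\|,\qquad \varphi(\alpha_0):=2D^*\bar F_1(\alpha_0).$$
   Context: Fix constants $a>0$, $Q_0>0$, $\lambda_0>0$, $\theta_m>0$ and put $D^*=\frac{Q_0}{4\pi\lambda_0\theta_m}$. For $\alpha_0>0$: $C[0,\alpha_0]$ is the Banach space of real continuous functions on $[0,\alpha_0]$ with norm $\|f\|=\max_{[0,\alpha_0]}|f|$. We are given maps $L^*,N^*$ assigning to each $f_1\in C[0,\alpha_0]$ positive continuous functions $L^*(f_1),N^*(f_1)$ on $(0,\alpha_0]$. Define, for $0\le\eta\le\alpha_0$: $E_1(0,\eta,f_1)=\exp\big(-\alpha_0 a\int_0^{\eta}\frac{N^*(f_1)(s)}{L^*(f_1)(s)}ds\big)$, $F_1(0,\eta,f_1)=\int_0^{\eta}\frac{E_1(0,s,f_1)}{s\,L^*(f_1)(s)}ds$, and the operator $U^{\alpha_0}(f_1)(\eta)=D^*\big[F_1(0,\alpha_0,f_1)-F_1(0,\eta,f_1)\big]$, $0\le\eta\le\alpha_0$. Hypothesis (H1) (the part used here): there are positive constants $\mu,\nu,L_{1m},L_{1M},N_{1m},N_{1M}$ with $\mu>\max(1,\nu)$ such that for all $\alpha_0>0$, all $f_1\in C[0,\alpha_0]$ and all $0<\eta\le\alpha_0$: $L_{1m}\eta^{-\mu}\le L^*(f_1)(\eta)\le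 L_{1M}\eta^{-\mu}$ and $N_{1m}\eta^{-\nu}\le N^*(f_1)(\eta)\le N_{1M}\eta^{-\nu}$. Hypothesis (H2) (the part used here): there are constants $\bar L_1,\bar N_1\ge0$ such that for all $\alpha_0>0$ and all $f_1,f_1^*\in C[0,\alpha_0]$: $\sup_{0<s\le\alpha_0}|L^*(f_1)(s)-L^*(f_1^* )(s)|\le\bar L_1\|f_1-f_1^*\|$ and $\sup_{0<s\le\alpha_0}|N^*(f_1)(s)-N^*(f_1^* )(s)|\le\bar N_1\|f_1-f_1^*\|$. For $z>0$, $\bar F_1(z)=\frac{za}{L_{1m}^2}\Big(\frac{\bar N_1 z^{2\mu+1}}{(\mu+1)(2\mu+1)}+\frac{\bar L_1N_{1M}}{L_{1m}}\frac{z^{3\mu-\nu+1}}{(2\mu-\nu+1)(3\mu-\nu+1)}\Big)+\frac{\bar L_1}{L_{1m}^2}\frac{z^{2\mu}}{2\mu}$. *)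

From Stdlib Require Import Reals.
From Coquelicot Require Import Coquelicot.
Open Scope R_scope.

Definition cont_on (D : R -> Prop) (f : R -> R) : Prop :=
  forall x, D x -> filterlim f (within D (locally x)) (locally (f x)).

Definition Icc (a b : R) : R -> Prop := fun x => a <= x <= b.
Definition Ioc (a b : R) : R -> Prop := fun x => a < x <= b.

Definition normC (a0 : R) (g : R -> R) : R :=
  real (Lub_Rbar (fun y => exists x, 0 <= x <= a0 /\ y = Rabs (g x))).

(* The operator maps: Ls a0 f1 is L^*(f1) for f1 in C[0,a0] (similarly Ns). *)
Definition opmap := R -> (R -> R) -> R -> R.

Definition E1 (a : R) (Ls Ns : opmap) (a0 : R) (f1 : R -> R) (eta : R) : R :=
  exp (- (a0 * a * RInt (fun s => Ns a0 f1 s / Ls a0 f1 s) 0 eta)).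

Definition F1 (a : R) (Ls Ns : opmap) (a0 : R) (f1 : R -> R) (eta : R) : R :=
  RInt (fun s => E1 a Ls Ns a0 f1 s / (s * Ls a0 f1 s)) 0 eta.

Definition Dstar (Q0 lambda0 thetam : R) : R := Q0 / (4 * PI * lambda0 * thetam).

Definition U (a Q0 lambda0 thetam : R) (Ls Ns : opmap) (a0 : R) (f1 : R -> R) (eta : R) : R :=
  Dstar Q0 lambda0 thetam * (F1 a Ls Ns a0 f1 a0 - F1 a Ls Ns a0 f1 eta).

Definition Fbar1 (a mu nu L1m N1M Lbar1 Nbar1 : R) (z : R) : R :=
  z * a / (L1m ^ 2) *
    (Nbar1 * Rpower z (2 * mu + 1) / ((mu + 1) * (2 * mu + 1))
     + Lbar1 * N1M / L1m * Rpower z (3 * mu - nu + 1)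
         / ((2 * mu - nu + 1) * (3 * mu - nu + 1)))
  + Lbar1 / (L1m ^ 2) * Rpower z (2 * mu) / (2 * mu).

(* Hypothesis (H1) (used part) together with the standing assumption that
   L^*(f1), N^*(f1) are positive continuous functions on (0,a0]. *)
Definition H1 (Ls Ns : opmap) (mu nu L1m L1M N1m N1M : R) : Prop :=
  0 < mu /\ 0 < nu /\ 0 < L1m /\ 0 < L1M /\ 0 < N1m /\ 0 < N1M /\
  Rmax 1 nu < mu /\
  forall a0 f1, 0 < a0 -> cont_on (Icc 0 a0) f1 ->
    cont_on (Ioc 0 a0) (Ls a0 f1) /\ cont_on (Ioc 0 a0) (Ns a0 f1) /\
    forall eta, 0 < eta <= a0 ->
      0 < Ls a0 f1 eta /\ 0 < Ns a0 f1 eta /\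
      L1m * Rpower eta (- mu) <= Ls a0 f1 eta <= L1M * Rpower eta (- mu) /\
      N1m * Rpower eta (- nu) <= Ns a0 f1 eta <= N1M * Rpower eta (- nu).

(* Hypothesis (H2) (used part); "sup_{0<s<=a0} |..| <= c" written pointwise. *)
Definition H2 (Ls Ns : opmap) (Lbar1 Nbar1 : R) : Prop :=
  0 <= Lbar1 /\ 0 <= Nbar1 /\
  forall a0 f1 f1s, 0 < a0 -> cont_on (Icc 0 a0) f1 -> cont_on (Icc 0 a0) f1s ->
    forall s, 0 < s <= a0 ->
      Rabs (Ls a0 f1 s - Ls a0 f1s s) <= Lbar1 * normC a0 (fun x => f1 x - f1s x) /\
      Rabs (Ns a0 f1 s - Ns a0 f1s s) <= Nbar1 * normC a0 (fun x => f1 x - f1s x).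

(* Since L^* >= L1m s^(-mu) and N^* <= N1M s^(-nu), the integrands N/L and E_1/(s L) are
   O(s^(mu-nu)) and O(s^(mu-1)) at 0, so they are Riemann integrable on [0,a0] once extended by
   zero.  For two data f1, f1* at distance d, writing N/L - N'/L' = (N-N')/L + N'(L'-L)/(L L')
   and using (H2) gives |Delta(N/L)| <= d (Nb s^mu / L1m + Lb N1M s^(2mu-nu) / L1m^2); as
   exp(-x) is 1-Lipschitz on x >= 0, integrating bounds |Delta E_1|, the same splitting bounds
   |Delta(E_1/(s L))| by powers of s, and a second integration bounds |Delta F_1(eta)| by
   F1bar(a0) d on [0,a0].  U is a difference of two values of F_1, hence the factor 2. *)

From Stdlib Require Import Reals Lra.
From Coquelicot Require Import Coquelicot.
Open Scope R_scope.

Lemma Rpower_pos x y : 0 < Rpower x y.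
Proof. apply exp_pos. Qed.

Lemma ball_0_Rabs (e : posreal) (x : R) : ball 0 e x <-> Rabs x < e.
Proof.
  change (Rabs (x + - 0) < e <-> Rabs x < e). now rewrite Ropp_0, Rplus_0_r.
Qed.

Lemma vanish_of_Rpower_bound (f : R -> R) (C q b : R) : 0 < q -> 0 < b ->
  (forall s, 0 < s <= b -> Rabs (f s) <= C * Rpower s q) ->
  filterlim f (at_right 0) (locally 0).
Proof.
  intros Hq Hb Hf. apply filterlim_locally. intros eps.
  set (C' := Rabs C + 1).
  assert (HC' : 0 < C') by (unfold C'; pose proof (Rabs_pos C); lra).
  set (delta := Rmin b (Rpower (eps / C') (/ q))).
  assert (Hdelta : 0 < delta).
  { apply Rmin_glb_lt; [lra | apply Rpower_pos]. }
  exists (mkposreal delta Hdelta). intros s Hs Hs0.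
  apply (ball_0_Rabs _ s) in Hs. rewrite Rabs_pos_eq in Hs by lra. simpl in Hs.
  apply ball_0_Rabs.
  assert (Hsb : s <= b)
    by (pose proof (Rmin_l b (Rpower (eps / C') (/ q))); unfold delta in Hs; lra).
  assert (Hepsc : 0 < eps / C') by (apply Rdiv_lt_0_compat; [apply cond_pos | lra]).
  assert (Hsq : Rpower s q < eps / C').
  { replace (eps / C') with (Rpower (Rpower (eps / C') (/ q)) q).
    - apply Rlt_Rpower_l; [lra|]. split; [lra|].
      pose proof (Rmin_r b (Rpower (eps / C') (/ q))). unfold delta in Hs. lra.
    - rewrite Rpower_mult, Rinv_l, Rpower_1 by lra. reflexivity. }
  apply Rle_lt_trans with (C' * Rpower s q).
  - eapply Rle_trans; [apply Hf; lra|]. apply Rmult_le_compat_r.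
    + left; apply Rpower_pos.
    + unfold C'; pose proof (Rle_abs C); lra.
  - replace (pos eps) with (C' * (eps / C')) by (field; lra).
    apply Rmult_lt_compat_l; lra.
Qed.

Lemma Rpower_vanishes (q : R) : 0 < q ->
  filterlim (fun s => Rpower s q) (at_right 0) (locally 0).
Proof.
  intros Hq. apply (vanish_of_Rpower_bound _ 1 q 1 Hq Rlt_0_1). intros s _.
  rewrite Rabs_pos_eq by (left; apply Rpower_pos). lra.
Qed.

(* Functions known only on [(0,b]] are integrated through this extension; it also removes the
   junk value [Rpower 0 q = 1]. *)
Definition zero_ext (f : R -> R) (s : R) : R := if Rle_dec s 0 then 0 else f s.

Lemma continuous_zero_ext (f : R -> R) (z : R) :
  (forall x, 0 < x -> continuous f x) -> filterlim f (at_right 0) (locally 0) ->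
  continuous (zero_ext f) z.
Proof.
  intros Hf H0.
  destruct (Rlt_or_le 0 z) as [Hz | Hz].
  - apply continuous_ext_loc with f; [|now apply Hf].
    exists (mkposreal z Hz). intros y Hy.
    apply Rabs_lt_between' in Hy. unfold zero_ext. destruct Rle_dec; simpl in *; lra.
  - destruct (Rlt_or_le z 0) as [Hz' | Hz'].
    + apply continuous_ext_loc with (fun _ => 0); [|apply continuous_const].
      exists (mkposreal (- z) ltac:(lra)). intros y Hy.
      apply Rabs_lt_between' in Hy. unfold zero_ext. destruct Rle_dec; simpl in *; lra.
    + replace z with 0 by lra. intros P [eps HP].
      destruct (proj1 (filterlim_locally f 0) H0 eps) as [delta Hdelta].
      exists delta. intros y Hy. apply HP.
      replace (zero_ext f 0) with 0 by (unfold zero_ext; destruct Rle_dec; lra).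
      unfold zero_ext. destruct Rle_dec as [Hy0|Hy0].
      * apply ball_center.
      * apply Hdelta; [exact Hy | lra].
Qed.

Lemma continuous_Rmin_l (b z : R) : continuous (fun s => Rmin s b) z.
Proof.
  apply continuity_pt_filterlim. intros e He. exists e. split; [exact He|].
  intros y [_ Hy]. simpl in *. unfold R_dist in *.
  unfold Rmin; repeat destruct Rle_dec; unfold Rabs in *; repeat destruct Rcase_abs; lra.
Qed.

Lemma continuous_clamp (f : R -> R) (b z : R) : 0 < b -> cont_on (Ioc 0 b) f -> 0 < z ->
  continuous (fun s => f (Rmin s b)) z.
Proof.
  intros Hb Hf Hz.
  apply (filterlim_comp _ _ _ (fun s => Rmin s b) f _ (within (Ioc 0 b) (locally (Rmin z b)))).
  - intros P HP. assert (Hpos : locally z (fun s => 0 < s)).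
    { exists (mkposreal z Hz). intros y Hy. apply Rabs_lt_between' in Hy. simpl in Hy. lra. }
    assert (HPm : locally z (fun s => Ioc 0 b (Rmin s b) -> P (Rmin s b)))
      by exact (continuous_Rmin_l b z _ HP).
    unfold filtermap. generalize (filter_and _ _ HPm Hpos).
    apply filter_imp. intros s [HPs Hs]. apply HPs.
    unfold Ioc, Rmin; destruct Rle_dec; lra.
  - apply Hf. unfold Ioc, Rmin; destruct Rle_dec; lra.
Qed.

Lemma continuous_zero_ext_clamp (f : R -> R) (b z : R) : 0 < b ->
  (forall x, 0 < x -> continuous (fun s => f (Rmin s b)) x) ->
  filterlim f (at_right 0) (locally 0) -> continuous (zero_ext (fun s => f (Rmin s b))) z.
Proof.
  intros Hb Hf H0. apply continuous_zero_ext; [exact Hf|].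
  apply filterlim_ext_loc with f; [|exact H0].
  exists (mkposreal b Hb). intros s Hs Hs0. apply Rabs_lt_between' in Hs. simpl in Hs.
  now rewrite Rmin_left by lra.
Qed.

Lemma zero_ext_clamp_eq (f : R -> R) (b s : R) : 0 < s <= b ->
  zero_ext (fun s => f (Rmin s b)) s = f s.
Proof. intros Hs. unfold zero_ext. destruct Rle_dec; [lra|]. now rewrite Rmin_left by lra. Qed.

Lemma ex_RInt_of_vanishing (f : R -> R) (b eta : R) : 0 < b ->
  (forall x, 0 < x -> continuous (fun s => f (Rmin s b)) x) ->
  filterlim f (at_right 0) (locally 0) -> 0 <= eta <= b -> ex_RInt f 0 eta.
Proof.
  intros Hb Hf H0 Heta.
  apply ex_RInt_ext with (zero_ext (fun s => f (Rmin s b))).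
  { intros x Hx. rewrite Rmin_left, Rmax_right in Hx by lra. apply zero_ext_clamp_eq; lra. }
  apply (@ex_RInt_continuous R_CompleteNormedModule). intros z _.
  now apply continuous_zero_ext_clamp.
Qed.

Lemma is_derive_zero_ext_Rpower (q x : R) : 0 < q -> 0 <= x ->
  is_derive (zero_ext (fun s => Rpower s (q + 1) / (q + 1))) x (zero_ext (fun s => Rpower s q) x).
Proof.
  intros Hq Hx. destruct (Rle_lt_or_eq _ _ Hx) as [Hx0 | <-].
  - apply is_derive_ext_loc with (fun s => Rpower s (q + 1) / (q + 1)).
    { exists (mkposreal x Hx0). intros y Hy. apply Rabs_lt_between' in Hy.
      unfold zero_ext. destruct Rle_dec; simpl in *; lra. }
    replace (zero_ext (fun s => Rpower s q) x) with ((q + 1) * Rpower x (q + 1 - 1) / (q + 1)).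
    + apply is_derive_Reals, derivable_pt_lim_div_scal, derivable_pt_lim_power, Hx0.
    + unfold zero_ext. destruct Rle_dec; [lra|]. replace (q + 1 - 1) with q by ring. field. lra.
  - apply is_derive_Reals. intros eps Heps.
    destruct (proj1 (filterlim_locally (F := at_right 0) _ 0) (Rpower_vanishes q Hq)
      (mkposreal eps Heps)) as [delta Hdelta].
    exists delta. intros h Hh0 Hh.
    replace (zero_ext (fun s => Rpower s q) 0) with 0 by (unfold zero_ext; destruct Rle_dec; lra).
    unfold zero_ext. rewrite Rplus_0_l. destruct (Rle_dec 0 0); [|lra].
    destruct Rle_dec as [Hhneg | Hhpos].
    + unfold Rminus. rewrite Rplus_opp_r, Rdiv_0_l, Rplus_0_l, Ropp_0, Rabs_R0. exact Heps.
    + assert (Hball := proj1 (ball_0_Rabs _ _) (Hdelta h (proj2 (ball_0_Rabs _ _) Hh) ltac:(lra))).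
      rewrite Rpower_plus, Rpower_1 by lra.
      replace ((Rpower h q * h / (q + 1) - 0) / h - 0) with (Rpower h q / (q + 1))
        by (field; lra).
      pose proof (Rpower_pos h q). rewrite Rabs_pos_eq in Hball by lra.
      rewrite Rabs_pos_eq by (apply Rlt_le, Rdiv_lt_0_compat; lra).
      apply Rle_lt_trans with (Rpower h q); [|exact Hball].
      apply Rmult_le_reg_r with (q + 1); [lra|]. field_simplify; nra.
Qed.

Lemma is_RInt_Rpower (q eta : R) : 0 < q -> 0 < eta ->
  is_RInt (fun s => Rpower s q) 0 eta (Rpower eta (q + 1) / (q + 1)).
Proof.
  intros Hq Heta. apply is_RInt_ext with (zero_ext (fun s => Rpower s q)).
  { intros x Hx. rewrite Rmin_left, Rmax_right in Hx by lra.
    unfold zero_ext. destruct Rle_dec; [lra | reflexivity]. }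
  replace (Rpower eta (q + 1) / (q + 1))
    with (minus (zero_ext (fun s => Rpower s (q + 1) / (q + 1)) eta)
                (zero_ext (fun s => Rpower s (q + 1) / (q + 1)) 0)).
  - apply (@is_RInt_derive R_CompleteNormedModule); intros x Hx;
      rewrite Rmin_left, Rmax_right in Hx by lra.
    + apply is_derive_zero_ext_Rpower; lra.
    + apply continuous_zero_ext.
      * intros y Hy. apply continuity_pt_filterlim, derivable_continuous_pt.
        exists (q * Rpower y (q - 1)). now apply derivable_pt_lim_power.
      * now apply Rpower_vanishes.
  - unfold zero_ext, minus, plus, opp; simpl.
    do 2 destruct Rle_dec; lra.
Qed.

Lemma RInt_dist_le (f g h : R -> R) (a b v : R) : a <= b ->
  ex_RInt f a b -> ex_RInt g a b -> is_RInt h a b v ->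
  (forall s, a < s < b -> Rabs (f s - g s) <= h s) ->
  Rabs (RInt f a b - RInt g a b) <= v.
Proof.
  intros Hab Hf Hg Hh Hfg.
  assert (Hfg_int : ex_RInt (fun s => f s - g s) a b) by exact (ex_RInt_minus f g a b Hf Hg).
  change (Rabs (minus (RInt f a b) (RInt g a b)) <= v).
  rewrite <- (RInt_minus f g a b Hf Hg), <- (is_RInt_unique h a b v Hh).
  eapply Rle_trans; [now apply abs_RInt_le|].
  apply RInt_le; [exact Hab | now apply ex_RInt_norm | now exists v | exact Hfg].
Qed.

Lemma exp_le_1 (t : R) : t <= 0 -> exp t <= 1.
Proof.
  intros Ht. rewrite <- exp_0. destruct (Rle_lt_or_eq _ _ Ht) as [Hlt | ->].
  - left; now apply exp_increasing.
  - apply Rle_refl.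
Qed.

Lemma Rabs_exp_opp_sub_le (x y : R) : 0 <= x -> 0 <= y ->
  Rabs (exp (- x) - exp (- y)) <= Rabs (x - y).
Proof.
  (* [exp(-u) - exp(-v) = exp(-u) (1 - exp(-(v-u)))], with [exp(-u) <= 1] and
     [1 - exp(-t) <= t]. *)
  assert (Hle : forall u v, 0 <= u <= v -> 0 <= exp (- u) - exp (- v) <= v - u).
  { intros u v Huv.
    replace (exp (- v)) with (exp (- u) * exp (- (v - u))) by (rewrite <- exp_plus; f_equal; ring).
    assert (Hu : exp (- u) <= 1) by (apply exp_le_1; lra).
    assert (Hvu : exp (- (v - u)) <= 1) by (apply exp_le_1; lra).
    pose proof (exp_pos (- u)). pose proof (exp_ineq1_le (- (v - u))). nra. }
  intros Hx Hy. destruct (Rle_or_lt x y) as [Hxy | Hxy].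
  - specialize (Hle x y (conj Hx Hxy)).
    rewrite Rabs_pos_eq, Rabs_left1 by lra. lra.
  - specialize (Hle y x (conj Hy (Rlt_le _ _ Hxy))).
    rewrite Rabs_left1, Rabs_pos_eq by lra. lra.
Qed.

Lemma Rabs_div_sub_le (N N' L L' : R) : 0 < L -> 0 < L' ->
  Rabs (N / L - N' / L') <= Rabs (N - N') / L + Rabs N' * Rabs (L - L') / (L * L').
Proof.
  intros HL HL'.
  replace (N / L - N' / L') with ((N - N') / L + N' * (L' - L) / (L * L')) by (field; lra).
  eapply Rle_trans; [apply Rabs_triang|]. apply Rplus_le_compat; right.
  - unfold Rdiv. now rewrite Rabs_mult, Rabs_inv, (Rabs_pos_eq L) by lra.
  - unfold Rdiv. rewrite !Rabs_mult, Rabs_inv, (Rabs_pos_eq (L * L')) by nra.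
    now rewrite <- (Rabs_Ropp (L' - L)), Ropp_minus_distr.
Qed.

Lemma normC_ge0 (a0 : R) (g : R -> R) : 0 <= a0 -> 0 <= normC a0 g.
Proof.
  intros Ha0. unfold normC.
  destruct (Lub_Rbar_correct (fun y => exists x, 0 <= x <= a0 /\ y = Rabs (g x))) as [Hub _].
  assert (H0 := Hub (Rabs (g 0)) (ex_intro _ 0 (conj (conj (Rle_refl 0) Ha0) eq_refl))).
  destruct (Lub_Rbar _); simpl in *; [|lra|lra].
  eapply Rle_trans; [apply Rabs_pos | exact H0].
Qed.

Lemma normC_le (a0 : R) (g : R -> R) (B : R) : 0 <= a0 ->
  (forall x, 0 <= x <= a0 -> Rabs (g x) <= B) -> normC a0 g <= B.
Proof.
  intros Ha0 HB. unfold normC.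
  destruct (Lub_Rbar_correct (fun y => exists x, 0 <= x <= a0 /\ y = Rabs (g x))) as [Hub Hlub].
  assert (Hle : Rbar_le (Lub_Rbar (fun y => exists x, 0 <= x <= a0 /\ y = Rabs (g x))) B).
  { apply Hlub. intros y [x [Hx ->]]. now apply HB. }
  assert (H0 := Hub (Rabs (g 0)) (ex_intro _ 0 (conj (conj (Rle_refl 0) Ha0) eq_refl))).
  destruct (Lub_Rbar _); simpl in *; easy.
Qed.

(* The part of (H1) used for a single [f1], with [b = a0]. *)
Definition admissible (mu nu L1m N1M b : R) (L N : R -> R) : Prop :=
  cont_on (Ioc 0 b) L /\ cont_on (Ioc 0 b) N /\
  forall s, 0 < s <= b ->
    0 < N s /\ L1m * Rpower s (- mu) <= L s /\ N s <= N1M * Rpower s (- nu).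

(* [E_1(0,eta,f_1)] is [decay (a0 * a) (L^*(f_1)) (N^*(f_1)) eta]. *)
Definition decay (k : R) (L N : R -> R) (eta : R) : R :=
  exp (- (k * RInt (fun s => N s / L s) 0 eta)).

Section Weights.

Variables (k mu nu L1m N1M b : R).
Hypotheses (Hk : 0 <= k) (Hb : 0 < b) (Hmu : 1 < mu) (Hnu : nu < mu) (HL1m : 0 < L1m).

Section Single.

Variables (L N : R -> R).
Hypothesis HLN : admissible mu nu L1m N1M b L N.

Lemma admissible_L_pos (s : R) : 0 < s <= b -> 0 < L s.
Proof.
  intros Hs. destruct HLN as (_ & _ & HB). destruct (HB s Hs) as (_ & HL & _).
  pose proof (Rpower_pos s (- mu)). nra.
Qed.

Lemma admissible_N1M_pos : 0 < N1M.
Proof.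
  destruct HLN as (_ & _ & HB). destruct (HB b ltac:(lra)) as (HN & _ & HNup).
  pose proof (Rpower_pos b (- nu)). nra.
Qed.

Lemma admissible_inv_le (s : R) : 0 < s <= b -> 0 < / L s <= Rpower s mu / L1m.
Proof.
  intros Hs. destruct HLN as (_ & _ & HB). destruct (HB s Hs) as (_ & HL & _).
  rewrite Rpower_Ropp in HL. pose proof (Rpower_pos s mu).
  assert (Hlow : 0 < L1m * / Rpower s mu) by (apply Rmult_lt_0_compat, Rinv_0_lt_compat; lra).
  split; [apply Rinv_0_lt_compat; lra|].
  replace (Rpower s mu / L1m) with (/ (L1m * / Rpower s mu)) by (field; lra).
  now apply Rinv_le_contravar.
Qed.

Lemma ratio_bound (s : R) : 0 < s <= b ->
  0 < N s / L s <= N1M / L1m * Rpower s (mu - nu).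
Proof.
  intros Hs. destruct HLN as (_ & _ & HB). destruct (HB s Hs) as (HN & _ & HNup).
  destruct (admissible_inv_le s Hs) as [HLi HLi'].
  rewrite Rpower_Ropp in HNup. unfold Rminus. rewrite Rpower_plus, Rpower_Ropp.
  pose proof (Rpower_pos s nu). unfold Rdiv.
  split; [now apply Rmult_lt_0_compat|].
  replace (N1M * / L1m * (Rpower s mu * / Rpower s nu))
    with (N1M * / Rpower s nu * (Rpower s mu / L1m)) by (field; lra).
  apply Rmult_le_compat; lra.
Qed.

Lemma continuous_ratio_clamp (z : R) : 0 < z ->
  continuous (fun s => N (Rmin s b) / L (Rmin s b)) z.
Proof.
  intros Hz. destruct HLN as (HLc & HNc & _).
  assert (Hzb : 0 < Rmin z b <= b) by (unfold Rmin; destruct Rle_dec; lra).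
  apply (continuous_mult (K := R_AbsRing)); [now apply continuous_clamp|].
  apply continuous_Rinv_comp; [now apply continuous_clamp|].
  apply Rgt_not_eq, admissible_L_pos, Hzb.
Qed.

Lemma ratio_vanishes : filterlim (fun s => N s / L s) (at_right 0) (locally 0).
Proof.
  apply (vanish_of_Rpower_bound _ (N1M / L1m) (mu - nu) b); [lra | exact Hb|].
  intros s Hs. destruct (ratio_bound s Hs). rewrite Rabs_pos_eq; lra.
Qed.

Lemma ex_RInt_ratio (eta : R) : 0 <= eta <= b -> ex_RInt (fun s => N s / L s) 0 eta.
Proof.
  apply ex_RInt_of_vanishing; [exact Hb | exact continuous_ratio_clamp | exact ratio_vanishes].
Qed.

Lemma RInt_ratio_ge0 (eta : R) : 0 <= eta <= b -> 0 <= RInt (fun s => N s / L s) 0 eta.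
Proof.
  intros Heta. apply RInt_ge_0; [lra | now apply ex_RInt_ratio|].
  intros x Hx. apply Rlt_le, ratio_bound. lra.
Qed.

Lemma decay_bounds (eta : R) : 0 <= eta <= b -> 0 < decay k L N eta <= 1.
Proof.
  intros Heta. unfold decay. split; [apply exp_pos|].
  apply exp_le_1. pose proof (RInt_ratio_ge0 eta Heta). nra.
Qed.

Lemma continuous_decay_clamp (z : R) : 0 < z -> continuous (fun s => decay k L N (Rmin s b)) z.
Proof.
  intros Hz.
  set (r := zero_ext (fun s => N (Rmin s b) / L (Rmin s b))).
  assert (Hr : forall x, continuous r x)
    by (intros x; apply (continuous_zero_ext_clamp (fun y => N y / L y));
        [exact Hb | exact continuous_ratio_clamp | exact ratio_vanishes]).
  assert (HP : forall x, continuous (RInt r 0) x).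
  { intros x. apply continuous_RInt_1 with r 0. apply filter_forall. intros y.
    apply (@RInt_correct R_CompleteNormedModule), (@ex_RInt_continuous R_CompleteNormedModule).
    intros; apply Hr. }
  apply continuous_ext_loc with (fun s => exp ((- k) * RInt r 0 (Rmin s b))).
  - exists (mkposreal z Hz). intros y Hy. apply Rabs_lt_between' in Hy. simpl in Hy.
    unfold decay. rewrite Ropp_mult_distr_l. f_equal. f_equal. apply RInt_ext.
    intros x Hx. assert (Hyb : 0 <= Rmin y b <= b) by (unfold Rmin; destruct Rle_dec; lra).
    rewrite Rmin_left, Rmax_right in Hx by lra. apply (zero_ext_clamp_eq (fun y => N y / L y)). lra.
  - apply continuous_exp_comp, (continuous_mult (K := R_AbsRing)); [apply continuous_const|].
    apply (continuous_comp (fun s => Rmin s b) (RInt r 0)); [apply continuous_Rmin_l | apply HP].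
Qed.

Lemma integrand_bound (s : R) : 0 < s <= b ->
  Rabs (decay k L N s / (s * L s)) <= / L1m * Rpower s (mu - 1).
Proof.
  intros Hs. destruct (admissible_inv_le s Hs) as [HLi HLi'].
  destruct (decay_bounds s ltac:(lra)) as [HE HE'].
  pose proof (admissible_L_pos s Hs). pose proof (Rpower_pos s mu).
  unfold Rminus. rewrite Rpower_plus, Rpower_Ropp, Rpower_1 by lra.
  replace (decay k L N s / (s * L s)) with (decay k L N s * / L s * / s) by (field; lra).
  assert (Hsi : 0 < / s) by (apply Rinv_0_lt_compat; lra).
  rewrite Rabs_pos_eq by (apply Rmult_le_pos; [apply Rmult_le_pos|]; lra).
  replace (/ L1m * (Rpower s mu * / s)) with (1 * (Rpower s mu / L1m) * / s) by (field; lra).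
  apply Rmult_le_compat_r; [lra|]. apply Rmult_le_compat; lra.
Qed.

Lemma ex_RInt_integrand (eta : R) : 0 <= eta <= b ->
  ex_RInt (fun s => decay k L N s / (s * L s)) 0 eta.
Proof.
  apply ex_RInt_of_vanishing; [exact Hb | |].
  - intros z Hz. destruct HLN as (HLc & _ & _).
    assert (Hzb : 0 < Rmin z b <= b) by (unfold Rmin; destruct Rle_dec; lra).
    apply (continuous_mult (K := R_AbsRing)); [now apply continuous_decay_clamp|].
    apply continuous_Rinv_comp.
    + apply (continuous_mult (K := R_AbsRing)); [apply continuous_Rmin_l|].
      now apply continuous_clamp.
    + apply Rgt_not_eq, Rmult_lt_0_compat; [lra | now apply admissible_L_pos].
  - apply (vanish_of_Rpower_bound _ (/ L1m) (mu - 1) b); [lra | exact Hb|].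
    exact integrand_bound.
Qed.

End Single.

Section Pair.

Variables (L1 N1 L2 N2 : R -> R) (Lb Nb d : R).
Hypotheses (HLN1 : admissible mu nu L1m N1M b L1 N1) (HLN2 : admissible mu nu L1m N1M b L2 N2).
Hypotheses (HdL : 0 <= Lb * d) (HdN : 0 <= Nb * d).
Hypothesis HL12 : forall s, 0 < s <= b -> Rabs (L1 s - L2 s) <= Lb * d.
Hypothesis HN12 : forall s, 0 < s <= b -> Rabs (N1 s - N2 s) <= Nb * d.

Lemma ratio_sub_bound (s : R) : 0 < s <= b ->
  Rabs (N1 s / L1 s - N2 s / L2 s)
  <= Nb * d / L1m * Rpower s mu + Lb * d * N1M / L1m ^ 2 * Rpower s (2 * mu - nu).
Proof.
  intros Hs.
  destruct (admissible_inv_le _ _ HLN1 s Hs) as [HL1i HL1i'].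
  destruct (admissible_inv_le _ _ HLN2 s Hs) as [HL2i HL2i'].
  destruct HLN2 as (_ & _ & HB2). destruct (HB2 s Hs) as (HN2 & _ & HN2up).
  pose proof (admissible_L_pos _ _ HLN1 s Hs). pose proof (admissible_L_pos _ _ HLN2 s Hs).
  pose proof (Rpower_pos s mu). pose proof (Rpower_pos s (- nu)).
  replace (2 * mu - nu) with (mu + mu + - nu) by ring. rewrite !Rpower_plus.
  eapply Rle_trans; [now apply Rabs_div_sub_le|].
  pose proof (HN12 s Hs). pose proof (HL12 s Hs). pose proof (Rabs_pos (N1 s - N2 s)).
  pose proof (Rabs_pos (L1 s - L2 s)). rewrite (Rabs_pos_eq (N2 s)) by lra.
  apply Rplus_le_compat.
  - replace (Nb * d / L1m * Rpower s mu) with (Nb * d * (Rpower s mu / L1m)) by (field; lra).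
    unfold Rdiv. apply Rmult_le_compat; lra.
  - replace (N2 s * Rabs (L1 s - L2 s) / (L1 s * L2 s))
      with (N2 s * Rabs (L1 s - L2 s) * (/ L1 s * / L2 s)) by (field; lra).
    replace (Lb * d * N1M / L1m ^ 2 * (Rpower s mu * Rpower s mu * Rpower s (- nu)))
      with (N1M * Rpower s (- nu) * (Lb * d) * (Rpower s mu / L1m * (Rpower s mu / L1m)))
      by (field; lra).
    apply Rmult_le_compat; [nra | nra | apply Rmult_le_compat; lra |].
    apply Rmult_le_compat; lra.
Qed.

Lemma RInt_ratio_sub_bound (eta : R) : 0 < eta <= b ->
  Rabs (RInt (fun s => N1 s / L1 s) 0 eta - RInt (fun s => N2 s / L2 s) 0 eta)
  <= Nb * d / L1m * (Rpower eta (mu + 1) / (mu + 1))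
     + Lb * d * N1M / L1m ^ 2 * (Rpower eta (2 * mu - nu + 1) / (2 * mu - nu + 1)).
Proof.
  intros Heta.
  apply RInt_dist_le with
    (fun s => Nb * d / L1m * Rpower s mu + Lb * d * N1M / L1m ^ 2 * Rpower s (2 * mu - nu)).
  - lra.
  - apply (ex_RInt_ratio _ _ HLN1); lra.
  - apply (ex_RInt_ratio _ _ HLN2); lra.
  - apply (is_RInt_plus (V := R_NormedModule)); apply (is_RInt_scal (V := R_NormedModule));
      apply is_RInt_Rpower; lra.
  - intros s Hs. apply ratio_sub_bound. lra.
Qed.

Lemma decay_sub_bound (s : R) : 0 < s <= b ->
  Rabs (decay k L1 N1 s - decay k L2 N2 s)
  <= k * (Nb * d / L1m * (Rpower s (mu + 1) / (mu + 1))
          + Lb * d * N1M / L1m ^ 2 * (Rpower s (2 * mu - nu + 1) / (2 * mu - nu + 1))).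
Proof.
  intros Hs. unfold decay.
  pose proof (RInt_ratio_ge0 _ _ HLN1 s ltac:(lra)).
  pose proof (RInt_ratio_ge0 _ _ HLN2 s ltac:(lra)).
  eapply Rle_trans; [apply Rabs_exp_opp_sub_le; nra|].
  rewrite <- Rmult_minus_distr_l, Rabs_mult, (Rabs_pos_eq k) by exact Hk.
  apply Rmult_le_compat_l; [exact Hk | now apply RInt_ratio_sub_bound].
Qed.

Lemma integrand_sub_bound (s : R) : 0 < s <= b ->
  Rabs (decay k L1 N1 s / (s * L1 s) - decay k L2 N2 s / (s * L2 s))
  <= k * Nb * d / (L1m ^ 2 * (mu + 1)) * Rpower s (2 * mu)
     + k * Lb * d * N1M / (L1m ^ 3 * (2 * mu - nu + 1)) * Rpower s (3 * mu - nu)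
     + Lb * d / L1m ^ 2 * Rpower s (2 * mu - 1).
Proof.
  intros Hs.
  destruct (admissible_inv_le _ _ HLN1 s Hs) as [HL1i HL1i'].
  destruct (admissible_inv_le _ _ HLN2 s Hs) as [HL2i HL2i'].
  destruct (decay_bounds _ _ HLN2 s ltac:(lra)) as [HE2 HE2'].
  pose proof (admissible_L_pos _ _ HLN1 s Hs). pose proof (admissible_L_pos _ _ HLN2 s Hs).
  pose proof (Rpower_pos s mu). pose proof (Rpower_pos s (- nu)).
  pose proof (decay_sub_bound s Hs) as HdE. pose proof (HL12 s Hs).
  pose proof (Rabs_pos (decay k L1 N1 s - decay k L2 N2 s)). pose proof (Rabs_pos (L1 s - L2 s)).
  assert (Hsi : 0 < / s) by (apply Rinv_0_lt_compat; lra).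
  replace (decay k L1 N1 s / (s * L1 s) - decay k L2 N2 s / (s * L2 s))
    with ((decay k L1 N1 s / L1 s - decay k L2 N2 s / L2 s) * / s) by (field; lra).
  rewrite Rabs_mult, (Rabs_pos_eq (/ s)) by lra.
  assert (Hpow : forall x y, Rpower s (x + y) = Rpower s x * Rpower s y)
    by (intros; apply Rpower_plus).
  assert (E1 : Rpower s (mu + 1) = Rpower s mu * s)
    by (rewrite Hpow, Rpower_1; lra).
  assert (E2 : Rpower s (2 * mu - nu + 1) = Rpower s mu * Rpower s mu * Rpower s (- nu) * s)
    by (replace (2 * mu - nu + 1) with (mu + mu + - nu + 1) by ring; rewrite !Hpow, Rpower_1; lra).
  assert (E3 : Rpower s (2 * mu) = Rpower s mu * Rpower s mu)
    by (replace (2 * mu) with (mu + mu) by ring; apply Hpow).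
  assert (E4 : Rpower s (3 * mu - nu) = Rpower s mu * Rpower s mu * Rpower s mu * Rpower s (- nu))
    by (replace (3 * mu - nu) with (mu + mu + mu + - nu) by ring; rewrite !Hpow; lra).
  assert (E5 : Rpower s (2 * mu - 1) = Rpower s mu * Rpower s mu / s).
  { replace (2 * mu - 1) with (mu + mu + Ropp 1) by ring.
    rewrite !Hpow, Rpower_Ropp, Rpower_1 by lra. lra. }
  rewrite E1, E2 in HdE. rewrite E3, E4, E5.
  eapply Rle_trans.
  { apply Rmult_le_compat_r; [lra | now apply Rabs_div_sub_le]. }
  rewrite (Rabs_pos_eq (decay k L2 N2 s)) by lra.
  set (B := k * _) in HdE. set (q := Rpower s mu / L1m) in *.
  apply Rle_trans with ((B * q + Lb * d * (q * q)) * / s).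
  - apply Rmult_le_compat_r; [lra|]. apply Rplus_le_compat.
    + unfold Rdiv. apply Rmult_le_compat; lra.
    + replace (decay k L2 N2 s * Rabs (L1 s - L2 s) / (L1 s * L2 s))
        with (decay k L2 N2 s * Rabs (L1 s - L2 s) * (/ L1 s * / L2 s)) by (field; lra).
      apply Rmult_le_compat; [nra | nra | nra | apply Rmult_le_compat; lra].
  - right. unfold B, q. field. repeat split; lra.
Qed.

Lemma RInt_integrand_sub_bound (eta : R) : 0 <= eta <= b ->
  Rabs (RInt (fun s => decay k L1 N1 s / (s * L1 s)) 0 eta
        - RInt (fun s => decay k L2 N2 s / (s * L2 s)) 0 eta)
  <= k * Nb * d / (L1m ^ 2 * (mu + 1)) * (Rpower b (2 * mu + 1) / (2 * mu + 1))
     + k * Lb * d * N1M / (L1m ^ 3 * (2 * mu - nu + 1))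
         * (Rpower b (3 * mu - nu + 1) / (3 * mu - nu + 1))
     + Lb * d / L1m ^ 2 * (Rpower b (2 * mu) / (2 * mu)).
Proof.
  intros Heta.
  set (c1 := k * Nb * d / (L1m ^ 2 * (mu + 1))).
  set (c2 := k * Lb * d * N1M / (L1m ^ 3 * (2 * mu - nu + 1))).
  set (c3 := Lb * d / L1m ^ 2).
  pose proof (admissible_N1M_pos _ _ HLN1).
  assert (Hc1 : 0 <= c1).
  { apply Rdiv_le_0_compat; [rewrite Rmult_assoc; now apply Rmult_le_pos|].
    apply Rmult_lt_0_compat; [apply pow_lt|]; lra. }
  assert (Hc2 : 0 <= c2).
  { apply Rdiv_le_0_compat; [rewrite (Rmult_assoc k Lb d); apply Rmult_le_pos|].
    - now apply Rmult_le_pos.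
    - lra.
    - apply Rmult_lt_0_compat; [apply pow_lt|]; lra. }
  assert (Hc3 : 0 <= c3) by (apply Rdiv_le_0_compat; [lra | apply pow_lt; lra]).
  assert (Hmono : forall p c, 0 < p -> 0 <= c -> 0 < eta ->
    c * (Rpower eta p / p) <= c * (Rpower b p / p)).
  { intros p c Hp Hc Heta0. apply Rmult_le_compat_l; [exact Hc|].
    apply Rmult_le_compat_r; [apply Rlt_le, Rinv_0_lt_compat, Hp|].
    apply Rle_Rpower_l; lra. }
  destruct (Rle_lt_or_eq _ _ (proj1 Heta)) as [Heta0 | <-].
  - apply Rle_trans with (c1 * (Rpower eta (2 * mu + 1) / (2 * mu + 1))
      + c2 * (Rpower eta (3 * mu - nu + 1) / (3 * mu - nu + 1))
      + c3 * (Rpower eta (2 * mu) / (2 * mu))).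
    + apply RInt_dist_le with (fun s => c1 * Rpower s (2 * mu) + c2 * Rpower s (3 * mu - nu)
                                       + c3 * Rpower s (2 * mu - 1)).
      * lra.
      * apply (ex_RInt_integrand _ _ HLN1); lra.
      * apply (ex_RInt_integrand _ _ HLN2); lra.
      * replace (2 * mu) with (2 * mu - 1 + 1) at 3 4 by ring.
        apply (is_RInt_plus (V := R_NormedModule)); [apply (is_RInt_plus (V := R_NormedModule))|];
          apply (is_RInt_scal (V := R_NormedModule)), is_RInt_Rpower; lra.
      * intros s Hs. apply integrand_sub_bound. lra.
    + apply Rplus_le_compat; [apply Rplus_le_compat|]; apply Hmono; lra.
  - rewrite !RInt_point. unfold zero; simpl. rewrite Rminus_0_r, Rabs_R0.
    assert (Hpos : forall p c, 0 < p -> 0 <= c -> 0 <= c * (Rpower b p / p)).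
    { intros p c Hp Hc. apply Rmult_le_pos; [exact Hc|].
      apply Rlt_le, Rdiv_lt_0_compat; [apply Rpower_pos | exact Hp]. }
    pose proof (Hpos (2 * mu + 1) c1 ltac:(lra) Hc1).
    pose proof (Hpos (3 * mu - nu + 1) c2 ltac:(lra) Hc2).
    pose proof (Hpos (2 * mu) c3 ltac:(lra) Hc3). lra.
Qed.

End Pair.
End Weights.

Lemma H1_admissible (Ls Ns : opmap) (mu nu L1m L1M N1m N1M a0 : R) (f : R -> R) :
  H1 Ls Ns mu nu L1m L1M N1m N1M -> 0 < a0 -> cont_on (Icc 0 a0) f ->
  admissible mu nu L1m N1M a0 (Ls a0 f) (Ns a0 f).
Proof.
  intros (_ & _ & _ & _ & _ & _ & _ & HH) Ha0 Hf.
  destruct (HH a0 f Ha0 Hf) as (HLc & HNc & HB).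
  split; [exact HLc | split; [exact HNc|]].
  intros s Hs. destruct (HB s Hs) as (_ & HN & [HL _] & [_ HNup]). auto.
Qed.

Lemma Dstar_pos (Q0 lambda0 thetam : R) : 0 < Q0 -> 0 < lambda0 -> 0 < thetam ->
  0 < Dstar Q0 lambda0 thetam.
Proof.
  intros HQ Hl Ht. unfold Dstar. pose proof PI_RGT_0.
  apply Rdiv_lt_0_compat; [exact HQ|].
  apply Rmult_lt_0_compat; [apply Rmult_lt_0_compat; [apply Rmult_lt_0_compat|]|]; lra.
Qed.

Lemma normC_U_sub_le (a Q0 lambda0 thetam : R) (Ls Ns : opmap) (a0 M : R) (f1 f2 : R -> R) :
  0 <= a0 -> 0 <= Dstar Q0 lambda0 thetam ->
  (forall eta, 0 <= eta <= a0 -> Rabs (F1 a Ls Ns a0 f1 eta - F1 a Ls Ns a0 f2 eta) <= M) ->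
  normC a0 (fun eta => U a Q0 lambda0 thetam Ls Ns a0 f1 eta
                       - U a Q0 lambda0 thetam Ls Ns a0 f2 eta)
  <= 2 * Dstar Q0 lambda0 thetam * M.
Proof.
  intros Ha0 HD HF. apply normC_le; [exact Ha0|]. intros eta Heta. unfold U.
  pose proof (HF a0 ltac:(lra)). pose proof (HF eta Heta).
  set (D := Dstar Q0 lambda0 thetam) in *.
  set (x := F1 a Ls Ns a0 f1 a0 - F1 a Ls Ns a0 f2 a0) in *.
  set (y := F1 a Ls Ns a0 f1 eta - F1 a Ls Ns a0 f2 eta) in *.
  replace (D * (F1 a Ls Ns a0 f1 a0 - F1 a Ls Ns a0 f1 eta)
           - D * (F1 a Ls Ns a0 f2 a0 - F1 a Ls Ns a0 f2 eta)) with (D * (x - y))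
    by (unfold x, y; ring).
  rewrite Rabs_mult, (Rabs_pos_eq D) by exact HD.
  pose proof (Rabs_triang x (- y)). rewrite Rabs_Ropp in *.
  replace (2 * D * M) with (D * (M + M)) by ring.
  apply Rmult_le_compat_l; [exact HD | unfold Rminus; lra].
Qed.

Theorem lemma3 (a Q0 lambda0 thetam : R) (Ls Ns : opmap)
  (mu nu L1m L1M N1m N1M Lbar1 Nbar1 : R) (a0 : R) :
  0 < a -> 0 < Q0 -> 0 < lambda0 -> 0 < thetam ->
  H1 Ls Ns mu nu L1m L1M N1m N1M ->
  H2 Ls Ns Lbar1 Nbar1 ->
  0 < a0 ->
  forall f1 f1s : R -> R,
    cont_on (Icc 0 a0) f1 -> cont_on (Icc 0 a0) f1s ->
    normC a0 (fun eta => U a Q0 lambda0 thetam Ls Ns a0 f1 eta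
                         - U a Q0 lambda0 thetam Ls Ns a0 f1s eta)
    <= 2 * Dstar Q0 lambda0 thetam * Fbar1 a mu nu L1m N1M Lbar1 Nbar1 a0
       * normC a0 (fun x => f1 x - f1s x).
Proof.
  intros Ha HQ Hl Ht HH1 HH2 Ha0 f1 f1s Hf1 Hf1s.
  pose proof (H1_admissible Ls Ns mu nu L1m L1M N1m N1M a0 f1 HH1 Ha0 Hf1) as Hadm1.
  pose proof (H1_admissible Ls Ns mu nu L1m L1M N1m N1M a0 f1s HH1 Ha0 Hf1s) as Hadm2.
  destruct HH1 as (_ & _ & HL1m & _ & _ & _ & Hmax & _).
  pose proof (Rmax_l 1 nu). pose proof (Rmax_r 1 nu).
  destruct HH2 as (HLb & HNb & HLip).
  set (d := normC a0 (fun x => f1 x - f1s x)).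
  assert (Hd : 0 <= d) by (apply normC_ge0; lra).
  rewrite Rmult_assoc.
  apply normC_U_sub_le; [lra | apply Rlt_le, Dstar_pos; assumption |].
  intros eta Heta.
  eapply Rle_trans.
  { apply (RInt_integrand_sub_bound (a0 * a) mu nu L1m N1M a0 ltac:(nra) Ha0 ltac:(lra)
      ltac:(lra) HL1m _ _ _ _ Lbar1 Nbar1 d Hadm1 Hadm2 ltac:(nra) ltac:(nra)); [| | exact Heta].
    - intros s Hs. apply (HLip a0 f1 f1s Ha0 Hf1 Hf1s s Hs).
    - intros s Hs. apply (HLip a0 f1 f1s Ha0 Hf1 Hf1s s Hs). }
  right. unfold Fbar1. field. repeat split; lra.
Qed.
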